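(* For every integer $n\ge1$ and every $u\in V$, $\Pr(E_{4u})<\dfrac{3}{\ln(n+1)}$.
   Context: For an integer $n\ge1$, the $n$-octahedral graph $G'_n=(V,E')$ is the undirected graph with vertex set $V=\{u\in\mathbb{Z}^3:|u_1|+|u_2|+|u_3|=n\}$ and edge set $E'=\{\{v,w\}\subset V: v\neq w,\ |v_i-w_i|\le 1 \text{ for all } i=1,2,3\}$. For $u,v\in V$, $d_{uv}$ denotes the shortest-path distance in $G'_n$, and $Z_u=\left(\sum_{w\in V\setminus\{u\}} d_{uw}^{-2}\right)^{-1}$. The OSW random graph $G_n=(V,E)$ is the directed graph in which, for every $\{u,v\}\in E'$, both $(u,v),(v,u)\in E$, and in addition each vertex $u\in V$, independently of the others, chooses one vertex $v\in V\setminus\{u\}$ with probability $Z_u d_{uv}^{-2}$ and the long-range edge $(u,v)$ is added; $C_{uv}$ denotes the event that $u$ chooses $v$. For an ordered pair $(x,y)$ of distinct vertices, say $(x,y)$ is of type $s$ if $\{x,y\}\in E'$, and of type $w$ if $d_{xy}\ge2$ and $C_{xy}$ occurs. A C3 rooted at $u$ of type $(t_1,t_2,t_3)\in\{s,w\}^3$ is a triple $(u,a,b)$ of pairwise distinct vertices such that $(u,a)$ is of type $t_1$, $(a,b)$ is of type $t_2$ and $(b,u)$ is of type $t_3$. $E_{4u}$ is the event that there exists a C3 rooted at $u$ of type $(w,s,s)$. *)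

From HB Require Import structures.
From mathcomp Require Import all_boot all_order all_algebra.
From Stdlib Require Import Reals.

Set Implicit Arguments.
Unset Strict Implicit.
Unset Printing Implicit Defensive.

(* integer coordinate encoded by an ordinal i < 2n+1 : value i - n *)
Definition zc (n : nat) (i : 'I_(2 * n + 1)) : int := GRing.add (Posz i) (GRing.opp (Posz n)).

Definition triple (n : nat) : finType :=
  ('I_(2 * n + 1) * 'I_(2 * n + 1) * 'I_(2 * n + 1))%type.

Definition on_oct (n : nat) (x : triple n) : bool :=
  (absz (zc x.1.1) + absz (zc x.1.2) + absz (zc x.2) == n)%N.

(* V = { u in Z^3 : |u1|+|u2|+|u3| = n } (every such u has |u_i| <= n) *)
Definition vert (n : nat) : finType := {x : triple n | on_oct x}.

Definition c1 n (v : vert n) : int := zc (val v).1.1.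
Definition c2 n (v : vert n) : int := zc (val v).1.2.
Definition c3 n (v : vert n) : int := zc (val v).2.

Definition adj n (v w : vert n) : bool :=
  [&& v != w, (absz (GRing.add (c1 v) (GRing.opp (c1 w))) <= 1)%N, (absz (GRing.add (c2 v) (GRing.opp (c2 w))) <= 1)%N
    & (absz (GRing.add (c3 v) (GRing.opp (c3 w))) <= 1)%N].

Fixpoint walk n (k : nat) (v w : vert n) : bool :=
  match k with
  | 0 => v == w
  | k'.+1 => [exists x : vert n, adj v x && walk k' x w]
  end.

(* shortest-path distance: least k with a walk of length k
   (G'_n is connected, so the least k is < #|V|) *)
Definition dist n (v w : vert n) : nat :=
  find (fun k => walk k v w) (iota 0 #|vert n|).

Definition Rsum (T : finType) (P : pred T) (F : T -> R) : R :=
  \big[Rplus/R0]_(i : T | P i) F i.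
Definition Rprod (T : finType) (F : T -> R) : R :=
  \big[Rmult/R1]_(i : T) F i.

Definition Zu n (u : vert n) : R :=
  Rinv (Rsum (fun w => w != u) (fun w => Rinv (pow (INR (dist u w)) 2))).

Definition pchoose n (u v : vert n) : R :=
  if v == u then R0 else Rmult (Zu u) (Rinv (pow (INR (dist u v)) 2)).

(* Sample space: choice functions f (f u = the vertex chosen by u),
   with the product (independent) distribution. *)
Definition weight n (f : {ffun vert n -> vert n}) : R :=
  Rprod (fun u => pchoose u (f u)).

Definition Pr n (A : pred {ffun vert n -> vert n}) : R :=
  Rsum A (@weight n).

Definition type_s n (x y : vert n) : bool := adj x y.
Definition type_w n (f : {ffun vert n -> vert n}) (x y : vert n) : bool :=
  (x != y) && (2 <= dist x y)%N && (f x == y).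

Definition E4 n (u : vert n) : pred {ffun vert n -> vert n} :=
  fun f => [exists a : vert n, exists b : vert n,
    [&& u != a, u != b, a != b, type_w f u a, type_s a b & type_s b u]].

(* Pr(E_4u) is at most Z_u * T, where T sums d_ua^-2 over the apexes a of possible
   (w,s,s)-triangles at u; such an a is within sup-distance 2 of u and has d_ua >= 2.
   Choose a coordinate h with |u_h| >= n/3 =: m.  The vertices on u's side of the
   plane x_h = 0 whose other two coordinates are at l1-distance k from u's are at
   least 4k in number and at graph distance <= k, so 1/Z_u >= 4 (1 + 1/2 + ... + 1/m)
   >= 4 ln(m+1).  If m >= 3 there are at most 24 apexes, each with weight <= 1/4, so
   Pr(E_4u) <= 6 / (4 ln(m+1)) < 3 / ln(n+1) as (m+1)^2 > n+1.  If n <= 6 it suffices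
   that Pr(E_4u) < 1 (a neighbour of u is never an apex) and ln 7 < 3. *)
From Pilot Require Import Defs.
From HB Require Import structures.
From mathcomp Require Import all_boot all_order all_algebra zify.
From Stdlib Require Import Reals Lra.

Set Implicit Arguments.
Unset Strict Implicit.
Unset Printing Implicit Defensive.

(* Stdlib's Reals rebinds the %N and %R delimiters *)
Delimit Scope nat_scope with N.
Delimit Scope ring_scope with R.

Lemma RplusA : associative Rplus.
Proof. by move=> x y z; rewrite Rplus_assoc. Qed.
Lemma RmultA : associative Rmult.
Proof. by move=> x y z; rewrite Rmult_assoc. Qed.

HB.instance Definition _ := Monoid.isComLaw.Build R R0 Rplus RplusA Rplus_comm Rplus_0_l.
HB.instance Definition _ := Monoid.isComLaw.Build R R1 Rmult RmultA Rmult_comm Rmult_1_l.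
HB.instance Definition _ := Monoid.isMulLaw.Build R R0 Rmult Rmult_0_l Rmult_0_r.
HB.instance Definition _ :=
  Monoid.isAddLaw.Build R Rmult Rplus Rmult_plus_distr_r Rmult_plus_distr_l.

Section RealSums.
Local Open Scope R_scope.
Variable T : finType.
Implicit Types (P Q : pred T) (F G : T -> R).

Lemma Rsum_le P F G : (forall i, P i -> F i <= G i) -> Rsum P F <= Rsum P G.
Proof.
move=> FG; apply: (big_ind2 (fun x y => x <= y)) => //; first exact: Rle_refl.
by move=> *; apply: Rplus_le_compat.
Qed.

Lemma Rsum_ge0 P F : (forall i, P i -> 0 <= F i) -> 0 <= Rsum P F.
Proof.
move=> F0; apply: (big_ind (fun x => 0 <= x)) => //; first exact: Rle_refl.
by move=> *; lra.
Qed.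

Lemma Rsum_mkcond P F : Rsum P F = Rsum predT (fun i => if P i then F i else 0).
Proof. exact: big_mkcond. Qed.

Lemma Rsum_subset P Q F :
  (forall i, P i -> Q i) -> (forall i, Q i -> 0 <= F i) -> Rsum P F <= Rsum Q F.
Proof.
move=> PQ F0; rewrite (Rsum_mkcond P) (Rsum_mkcond Q); apply: Rsum_le => i _.
case: (boolP (P i)) => Pi; first by rewrite (PQ _ Pi); apply: Rle_refl.
by case: ifP => Qi; [apply: F0 | apply: Rle_refl].
Qed.

Lemma Rsum_const P c : Rsum P (fun _ => c) = INR #|P| * c.
Proof.
rewrite /Rsum big_const; elim: #|P| => [|k IH]; first by rewrite /=; lra.
by rewrite iterS IH S_INR; lra.
Qed.

Lemma Rsum_mull P F c : Rsum P (fun i => c * F i) = c * Rsum P F.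
Proof. by rewrite /Rsum big_distrr. Qed.

Lemma Rsum_D1 P F x : P x -> Rsum P F = F x + Rsum (fun i => P i && (i != x)) F.
Proof. by move=> Px; rewrite /Rsum (bigD1 x). Qed.

Lemma eq_Rsuml P Q F : P =1 Q -> Rsum P F = Rsum Q F.
Proof. exact: eq_bigl. Qed.

Lemma Rsum_ID P Q F :
  Rsum P F = Rsum (fun i => P i && Q i) F + Rsum (fun i => P i && ~~ Q i) F.
Proof. exact: bigID. Qed.

End RealSums.

Import GRing.Theory Num.Theory.

Section Coordinates.
Local Open Scope ring_scope.
Variable n : nat.
Implicit Types v w x : vert n.

Definition i0 : 'I_3 := @Ordinal 3 0 isT.
Definition i1 : 'I_3 := @Ordinal 3 1 isT.
Definition i2 : 'I_3 := @Ordinal 3 2 isT.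

Definition coord v (i : 'I_3) : int :=
  if val i == 0%N then Defs.c1 v else if val i == 1%N then Defs.c2 v else Defs.c3 v.

Lemma ord3P (i : 'I_3) : [\/ i = i0, i = i1 | i = i2].
Proof.
case: i => [[|[|[|k]]] Hk] //; [constructor 1 | constructor 2 | constructor 3];
  exact: val_inj.
Qed.

Lemma coord_l1 v : (absz (coord v i0) + absz (coord v i1) + absz (coord v i2))%N = n.
Proof. exact: (eqP (valP v)). Qed.

Lemma zc_inj : injective (@zc n).
Proof. by move=> i j; rewrite /zc => E; apply: val_inj => /=; lia. Qed.

Lemma coord_inj v w : (forall i, coord v i = coord w i) -> v = w.
Proof.
move=> E; move: (E i0) (E i1) (E i2); rewrite /coord /= /Defs.c1 /Defs.c2 /Defs.c3.
move=> /zc_inj Ea /zc_inj Eb /zc_inj Ec; apply: val_inj.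
by case: (val v) (val w) Ea Eb Ec => [[a b] c] [[a' b'] c'] /= -> -> ->.
Qed.

(* inverse of [zc] on [-n, n] *)
Definition ord_of_int (z : int) : 'I_(2 * n + 1) :=
  Ordinal (ltn_pmod (absz (z + Posz n)) (ltn_addl (2 * n) (ltn0Sn 0))).

Lemma zc_ord_of_int z : (absz z <= n)%N -> zc (ord_of_int z) = z.
Proof. by move=> zn; rewrite /zc /ord_of_int /= modn_small; lia. Qed.

(* the vertex with coordinates [f], or the default [d] if [f] is off the octahedron *)
Definition vert_of d (f : 'I_3 -> int) : vert n :=
  odflt d (insub ((ord_of_int (f i0), ord_of_int (f i1), ord_of_int (f i2)) : triple n)).

Lemma coord_vert_of d f : (absz (f i0) + absz (f i1) + absz (f i2))%N = n ->
  forall i, coord (vert_of d f) i = f i.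
Proof.
move=> l1f.
have oct : on_oct ((ord_of_int (f i0), ord_of_int (f i1), ord_of_int (f i2)) : triple n).
  by rewrite /on_oct /= !zc_ord_of_int //; [apply/eqP | lia | lia | lia].
move=> i; rewrite /vert_of (insubT _ oct) /coord /Defs.c1 /Defs.c2 /Defs.c3 /=.
by case: (ord3P i) => -> /=; rewrite zc_ord_of_int //; lia.
Qed.

Lemma adjP v w :
  reflect (v != w /\ forall i, (absz (coord v i - coord w i) <= 1)%N) (adj v w).
Proof.
apply: (iffP and4P) => [[vw d1 d2 d3] | [vw d]]; first by split=> // i; case: (ord3P i) => ->.
by split; [|exact: d i0 | exact: d i1 | exact: d i2].
Qed.

Lemma walk_rcons k v w x : walk k v w -> adj w x -> walk k.+1 v x.
Proof.
elim: k v => [|k IH] v /=.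
  by move=> /eqP -> wx; apply/existsP; exists x; rewrite wx eqxx.
by case/existsP => y /andP [vy yw] wx; apply/existsP; exists y; rewrite vy; exact: IH yw wx.
Qed.

Lemma dist_le_walk k v w : walk k v w -> (Defs.dist v w <= k)%N.
Proof.
move=> vw; rewrite /Defs.dist; have [k_lt|k_ge] := ltnP k #|vert n|; last first.
  by apply: leq_trans k_ge; rewrite -{2}(size_iota 0 #|vert n|) find_size.
rewrite leqNgt; apply/negP => /(before_find 0%N).
by rewrite nth_iota // add0n vw.
Qed.

Lemma dist_gt0 v w : v != w -> (0 < Defs.dist v w)%N.
Proof.
move=> vw; rewrite lt0n; apply/negP => /eqP d0.
have Vn : (0 < #|vert n|)%N by apply/card_gt0P; exists v.
have found : has (fun k => walk k v w) (iota 0 #|vert n|).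
  by rewrite has_find -/(Defs.dist v w) d0 size_iota.
by move: (nth_find 0%N found); rewrite -/(Defs.dist v w) d0 nth_iota //= (negbTE vw).
Qed.

Lemma exists_vert_neq v : (0 < n)%N -> exists w, w != v.
Proof.
move=> n_gt0; pose f i := - coord v i.
have l1f : (absz (f i0) + absz (f i1) + absz (f i2))%N = n by rewrite !abszN coord_l1.
exists (vert_of v f); apply/eqP => E; have := coord_vert_of v l1f; rewrite E => cf.
by move: (cf i0) (cf i1) (cf i2) (coord_l1 v); rewrite /f; lia.
Qed.

End Coordinates.

Section IntLattice.
Local Open Scope ring_scope.

Lemma l1_pred (a b : int) k : (absz a + absz b)%N = k.+1 ->
  exists a' b' : int, (absz a' + absz b')%N = k /\ (absz (a - a') + absz (b - b'))%N = 1%N.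
Proof.
move=> ab; have [b_lt0|b_gt0|b0] := ltrgtP b 0; first by exists a, (b + 1); lia.
  by exists a, (b - 1); lia.
by have [a_lt0|a_gt0|a0] := ltrgtP a 0; [exists (a + 1), b | exists (a - 1), b | ]; lia.
Qed.

(* the 4k lattice points of the l1-circle of radius k, indexed by quadrant and offset *)
Definition circle k (x : 'I_4 * 'I_k) : int * int :=
  let: (r, j) := x in let a := Posz k - Posz j in let b := Posz j in
  match val r with 0 => (a, b) | 1 => (- b, a) | 2 => (- a, - b) | _ => (b, - a) end.

Lemma circle_l1 k (x : 'I_4 * 'I_k) : (absz (circle x).1 + absz (circle x).2)%N = k.
Proof. by case: x => [[[|[|[|[|r]]]] ?] j] //=; have := ltn_ord j; lia. Qed.

Lemma circle_inj k : injective (@circle k).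
Proof.
move=> [r j] [r' j'] E.
have [Ej Er] : j = j' :> nat /\ r = r' :> nat.
  move: E (ltn_ord j) (ltn_ord j').
  case: r => [[|[|[|[|r]]]] ?]; case: r' => [[|[|[|[|r']]]] ?] //= [] E1 E2 jk jk'; lia.
by congr pair; apply: val_inj.
Qed.

End IntLattice.

Lemma ord3_distinctP (p q h i : 'I_3) : p != q -> p != h -> q != h -> [\/ i = p, i = q | i = h].
Proof.
by move=> pq ph qh; case: (ord3P p) pq ph => ->; case: (ord3P q) qh => ->;
  case: (ord3P h) => -> //; case: (ord3P i) => ->;
  first [by constructor 1 | by constructor 2 | by constructor 3].
Qed.

Lemma sum_ord3_distinct (p q h : 'I_3) (g : 'I_3 -> nat) : p != q -> p != h -> q != h ->
  (g p + g q + g h = g i0 + g i1 + g i2)%N.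
Proof.
by move=> pq ph qh; case: (ord3P p) pq ph => ->; case: (ord3P q) qh => ->;
  case: (ord3P h) => -> //; lia.
Qed.

Section Hemisphere.
Local Open Scope ring_scope.
Variables (n : nat) (u : vert n) (p q h : 'I_3).
Hypotheses (pq : p != q) (ph : p != h) (qh : q != h).
Implicit Types (v w : vert n) (P Q : int).

Lemma coord_l1_pqh v : (absz (coord v p) + absz (coord v q) + absz (coord v h))%N = n.
Proof. by rewrite (sum_ord3_distinct (fun i => absz (coord v i)) pq ph qh) coord_l1. Qed.

Lemma coord_pqh_ext v w :
  [/\ coord v p = coord w p, coord v q = coord w q & coord v h = coord w h] -> v = w.
Proof.
by case=> Ep Eq Eh; apply: coord_inj => i; case: (ord3_distinctP i pq ph qh) => ->.
Qed.

Definition same_side v : bool := if 0 < coord u h then 0 <= coord v h else coord v h <= 0.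

Definition pq_dist v : nat := (absz (coord v p - coord u p) + absz (coord v q - coord u q))%N.

Definition side_h P Q : int :=
  if 0 < coord u h then Posz n - Posz (absz P) - Posz (absz Q)
  else - (Posz n - Posz (absz P) - Posz (absz Q)).

Definition side_vert P Q : vert n :=
  vert_of u (fun i => if i == p then P else if i == q then Q else side_h P Q).

Lemma coord_side_vert P Q : (absz P + absz Q <= n)%N ->
  [/\ coord (side_vert P Q) p = P, coord (side_vert P Q) q = Q
    & coord (side_vert P Q) h = side_h P Q].
Proof.
move=> PQn; rewrite /side_vert.
have [qp hp hq] : [/\ (q == p) = false, (h == p) = false & (h == q) = false].
  by split; apply/negbTE; rewrite eq_sym.
set f := fun i => _; have l1f : (absz (f i0) + absz (f i1) + absz (f i2))%N = n.
  rewrite -(sum_ord3_distinct (fun i => absz (f i)) pq ph qh) /f eqxx qp hp hq eqxx /side_h.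
  by case: (0 < coord u h); lia.
by rewrite !(coord_vert_of u l1f) /f eqxx qp hp hq eqxx.
Qed.

Lemma same_side_vert P Q : (absz P + absz Q <= n)%N -> same_side (side_vert P Q).
Proof.
move=> PQn; have [_ _ Eh] := coord_side_vert PQn.
by rewrite /same_side Eh /side_h; case: (0 < coord u h); lia.
Qed.

Lemma side_h_lipschitz P Q P' Q' :
  (absz (side_h P Q - side_h P' Q') <= absz (P - P') + absz (Q - Q'))%N.
Proof. by rewrite /side_h; case: (0 < coord u h); lia. Qed.

Lemma same_side_u : same_side u.
Proof. by rewrite /same_side; case: ifP => //; lia. Qed.

Lemma coord_h_same_side v : same_side v -> coord v h = side_h (coord v p) (coord v q).
Proof. by rewrite /same_side /side_h; have := coord_l1_pqh v; case: (0 < coord u h); lia. Qed.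

Lemma pq_dist_eq0 v : same_side v -> pq_dist v = 0%N -> v = u.
Proof.
move=> sv; rewrite /pq_dist => d0.
have [Ep Eq] : coord v p = coord u p /\ coord v q = coord u q by lia.
apply: coord_pqh_ext; split=> //.
by rewrite (coord_h_same_side sv) (coord_h_same_side same_side_u) Ep Eq.
Qed.

(* [k < |u_h|] guarantees that the lattice point one step closer to [u] in the
   [p]/[q]-plane still satisfies [|x_p| + |x_q| <= n] *)
Lemma pq_dist_pred v k : same_side v -> pq_dist v = k.+1 -> (k < absz (coord u h))%N ->
  exists2 w, same_side w /\ pq_dist w = k & adj w v.
Proof.
move=> sv dv kh; have [a [b [abk step1]]] := l1_pred dv.
have l1u := coord_l1_pqh u.
have PQn : (absz (coord u p + a)%R + absz (coord u q + b)%R <= n)%N by lia.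
have [Ep Eq Eh] := coord_side_vert PQn.
have dw : pq_dist (side_vert (coord u p + a) (coord u q + b)) = k.
  by rewrite /pq_dist Ep Eq; lia.
exists (side_vert (coord u p + a) (coord u q + b)); first by split; [exact: same_side_vert|].
apply/adjP; split; first by apply/eqP => E; move: dw; rewrite E dv; lia.
move=> i; rewrite /pq_dist in dv; case: (ord3_distinctP i pq ph qh) => ->.
- by rewrite Ep; lia.
- by rewrite Eq; lia.
by rewrite Eh (coord_h_same_side sv); apply: leq_trans (side_h_lipschitz _ _ _ _) _; lia.
Qed.

Lemma walk_pq_dist k v : same_side v -> pq_dist v = k -> (k <= absz (coord u h))%N ->
  walk k u v.
Proof.
elim: k v => [|k IH] v sv dv kh; first by rewrite (pq_dist_eq0 sv dv) /= eqxx.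
have [w [sw dw] wv] := pq_dist_pred sv dv kh.
by apply: walk_rcons wv; apply: IH => //; lia.
Qed.

Lemma dist_le_pq_dist v : same_side v -> (pq_dist v <= absz (coord u h))%N ->
  (Defs.dist u v <= pq_dist v)%N.
Proof. by move=> sv dv; apply: dist_le_walk; apply: walk_pq_dist. Qed.

Lemma card_pq_level k : (k <= absz (coord u h))%N ->
  (4 * k <= #|[pred v | same_side v && (pq_dist v == k)]|)%N.
Proof.
move=> kh; have l1u := coord_l1_pqh u.
pose c (x : 'I_4 * 'I_k) := side_vert (coord u p + (circle x).1) (coord u q + (circle x).2).
have PQn (x : 'I_4 * 'I_k) :
    (absz (coord u p + (circle x).1)%R + absz (coord u q + (circle x).2)%R <= n)%N.
  by have := circle_l1 x; lia.
have c_inj : injective c.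
  move=> x y /(congr1 (fun v => (coord v p, coord v q))).
  have [-> -> _] := coord_side_vert (PQn x); have [-> -> _] := coord_side_vert (PQn y).
  by case=> /addrI Ex /addrI Ey; apply: circle_inj; exact: injective_projections.
have -> : (4 * k = #|c @: [set: 'I_4 * 'I_k]|)%N.
  by rewrite card_imset // cardsT card_prod !card_ord.
apply: subset_leq_card; apply/subsetP => _ /imsetP [x _ ->]; rewrite inE /=.
have [Ep Eq _] := coord_side_vert (PQn x).
by rewrite same_side_vert //= /pq_dist Ep Eq ![coord u _ + _]addrC !addrK circle_l1.
Qed.

Lemma exists_neighbour :
  (0 < absz (coord u h))%N -> exists2 w, u != w & (Defs.dist u w <= 1)%N.
Proof.
move=> h_gt0; have /card_gt0P [w /andP [sw /eqP dw]] :
    (0 < #|[pred v | same_side v && (pq_dist v == 1%N)]|)%N.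
  by apply: leq_trans (card_pq_level h_gt0).
exists w; last by rewrite -dw; apply: dist_le_pq_dist; rewrite // dw.
by apply/eqP => uw; move: dw; rewrite -uw /pq_dist !subrr.
Qed.

End Hemisphere.

Section Logarithm.
Local Open Scope R_scope.

Fixpoint harm (m : nat) : R := if m is k.+1 then harm k + / INR k.+1 else 0.

Lemma harmS k : harm k.+1 = harm k + / (INR k + 1).
Proof. by rewrite -S_INR. Qed.

Lemma ln_succ_le x : 0 < x -> ln (x + 1) <= ln x + / x.
Proof.
move=> x_gt0; have ix_gt0 : 0 < / x by apply: Rinv_0_lt_compat.
have lt_exp : x + 1 < x * exp (/ x).
  have := exp_ineq1 (/ x) (Rgt_not_eq _ _ ix_gt0).
  by move=> /(Rmult_lt_compat_l x _ _ x_gt0); rewrite Rmult_plus_distr_l Rinv_r; lra.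
rewrite -(ln_exp (/ x)) -ln_mult //; last exact: exp_pos.
by apply: Rlt_le; apply: ln_increasing => //; lra.
Qed.

Lemma ln_le_harm m : ln (INR m + 1) <= harm m.
Proof.
elim: m => [|m IH]; first by rewrite /= Rplus_0_l ln_1; lra.
have m1_gt0 : 0 < INR m + 1 by have := pos_INR m; lra.
by rewrite harmS S_INR; apply: Rle_trans (ln_succ_le m1_gt0) _; lra.
Qed.

Lemma ln_gt0 x : 1 < x -> 0 < ln x.
Proof. by move=> x_gt1; rewrite -ln_1; apply: ln_increasing; lra. Qed.

Lemma ln_lt3 x : 0 < x -> x <= 7 -> ln x < 3.
Proof.
move=> x_gt0 x_le7; rewrite -[3](ln_exp 3); apply: ln_increasing => //.
have e1 : 2 < exp 1 by have := exp_ineq1 1 R1_neq_R0; lra.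
have -> : exp 3 = exp 1 * exp 1 * exp 1 by rewrite -!exp_plus; congr exp; lra.
have e2 : 2 * 2 < exp 1 * exp 1 by apply: Rmult_gt_0_lt_compat; lra.
have : 2 * 2 * 2 < exp 1 * exp 1 * exp 1 by apply: Rmult_gt_0_lt_compat; lra.
lra.
Qed.

Lemma ln_succ_lt_double n m : (2 <= m)%N -> (n <= 3 * m)%N ->
  ln (INR n + 1) < 2 * ln (INR m + 1).
Proof.
move=> m_ge2 nm; have m1_gt0 : 0 < INR m + 1 by have := pos_INR m; lra.
have : INR n.+1 < INR (m.+1 * m.+1) by apply: lt_INR; apply/ltP; nia.
rewrite mult_INR !S_INR => n_lt.
have -> : 2 * ln (INR m + 1) = ln ((INR m + 1) * (INR m + 1)) by rewrite ln_mult //; lra.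
by apply: ln_increasing => //; have := pos_INR n; lra.
Qed.

End Logarithm.

Section ProductMeasure.
Local Open Scope R_scope.
Variables (I J : finType) (pr : I -> J -> R).

Lemma Rsum_prod_marginal (u : I) (A : pred J) :
  (forall v, v != u -> Rsum predT (pr v) = 1) ->
  Rsum (fun f : {ffun I -> J} => A (f u)) (fun f => Rprod (fun v => pr v (f v))) =
  Rsum A (pr u).
Proof.
move=> pr1; pose F v x := if v == u then (if A x then pr u x else 0) else pr v x.
have -> : Rsum (fun f : {ffun I -> J} => A (f u)) (fun f => Rprod (fun v => pr v (f v))) =
          Rsum predT (fun f : {ffun I -> J} => Rprod (fun v => F v (f v))).
  rewrite Rsum_mkcond; apply: eq_bigr => f _; rewrite /Rprod (bigD1 u) //= [RHS](bigD1 u) //=.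
  rewrite [in RHS](eq_bigr (fun v => pr v (f v))); last by move=> v /negbTE vu; rewrite /F vu.
  by rewrite /F eqxx; case: (A (f u)); rewrite ?Rmult_0_l.
rewrite /Rsum /Rprod -(bigA_distr_bigA F) (bigD1 u) //= [X in _ * X]big1 => [|v vu].
  by rewrite Monoid.mulm1 /F eqxx -big_mkcond.
by rewrite /F (negbTE vu); exact: pr1.
Qed.

End ProductMeasure.

Section ChoiceDistribution.
Local Open Scope R_scope.
Variable n : nat.
Implicit Types (u v w a : vert n).

Definition inv_dist2 u w : R := / INR (Defs.dist u w) ^ 2.

Definition inv_dist2_sum u : R := Rsum (fun w => w != u) (inv_dist2 u).

Lemma inv_dist2_ge0 u w : 0 <= inv_dist2 u w.
Proof.
rewrite /inv_dist2; have [d0|d_gt0] := posnP (Defs.dist u w).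
  by rewrite d0 /= Rmult_0_l Rinv_0; apply: Rle_refl.
by apply: Rlt_le; apply: Rinv_0_lt_compat; apply: pow_lt; apply: lt_0_INR; apply/ltP.
Qed.

Lemma inv_dist2_ge u w k : u != w -> (Defs.dist u w <= k)%N -> / INR k ^ 2 <= inv_dist2 u w.
Proof.
move=> uw dk; have d_gt0 := dist_gt0 uw; rewrite /inv_dist2.
apply: Rinv_le_contravar; first by apply: pow_lt; apply: lt_0_INR; apply/ltP.
by apply: pow_incr; split; [apply: pos_INR | apply: le_INR; apply/leP].
Qed.

Lemma inv_dist2_gt0 u w : u != w -> 0 < inv_dist2 u w.
Proof.
move=> uw; apply: Rlt_le_trans (inv_dist2_ge uw (leqnn _)).
by apply: Rinv_0_lt_compat; apply: pow_lt; apply: lt_0_INR; apply/ltP; exact: dist_gt0.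
Qed.

Lemma inv_dist2_le_quarter u w : (2 <= Defs.dist u w)%N -> inv_dist2 u w <= / 4.
Proof.
move=> d2; apply: Rinv_le_contravar; first lra.
have : INR 2 <= INR (Defs.dist u w) by apply: le_INR; apply/leP.
by rewrite /= => d2R; nra.
Qed.

Lemma inv_dist2_sum_gt0 u : (0 < n)%N -> 0 < inv_dist2_sum u.
Proof.
move=> n_gt0; have [w wu] := exists_vert_neq u n_gt0.
rewrite /inv_dist2_sum (@Rsum_D1 _ (fun i => i != u) _ w wu).
have := @inv_dist2_gt0 u w; rewrite eq_sym => /(_ wu).
have : 0 <= Rsum (fun i => (i != u) && (i != w)) (inv_dist2 u).
  by apply: Rsum_ge0 => *; apply: inv_dist2_ge0.
lra.
Qed.

Lemma pchoose_ge0 u v : (0 < n)%N -> 0 <= pchoose u v.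
Proof.
move=> n_gt0; rewrite /pchoose; case: eqP => _; first exact: Rle_refl.
apply: Rmult_le_pos; last exact: inv_dist2_ge0.
by apply: Rlt_le; apply: Rinv_0_lt_compat; apply: inv_dist2_sum_gt0.
Qed.

Lemma Rsum_pchoose u (A : pred (vert n)) : (forall a, A a -> u != a) ->
  Rsum A (pchoose u) = Rsum A (inv_dist2 u) / inv_dist2_sum u.
Proof.
move=> Au; rewrite /Rdiv Rmult_comm -Rsum_mull; apply: eq_bigr => a /Au ua.
by rewrite /pchoose eq_sym (negbTE ua).
Qed.

Lemma pchoose_sum1 u : (0 < n)%N -> Rsum predT (pchoose u) = 1.
Proof.
move=> n_gt0; rewrite (@Rsum_D1 _ predT _ u) // {1}/pchoose eqxx Rplus_0_l.
rewrite Rsum_pchoose => [|a]; last by rewrite eq_sym.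
by rewrite /Rdiv Rinv_r //; apply: Rgt_not_eq; apply: inv_dist2_sum_gt0.
Qed.

End ChoiceDistribution.

Definition wss_apex n (u : vert n) : pred (vert n) :=
  fun a => [&& u != a, (2 <= Defs.dist u a)%N & [exists b, adj a b && adj b u]].

Section ApexProbability.
Local Open Scope R_scope.

Lemma weight_ge0 n (f : {ffun vert n -> vert n}) : (0 < n)%N -> 0 <= weight f.
Proof.
move=> n_gt0; apply: (big_ind (fun x => 0 <= x)) => [|x y|v _]; first lra.
  by move=> *; apply: Rmult_le_pos.
exact: pchoose_ge0.
Qed.

Lemma Pr_E4_le n (u : vert n) : (0 < n)%N ->
  Pr (E4 u) <= Rsum (wss_apex u) (inv_dist2 u) / inv_dist2_sum u.
Proof.
move=> n_gt0; rewrite -Rsum_pchoose => [|a /and3P [] //].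
rewrite -(@Rsum_prod_marginal _ _ (@pchoose n)) => [|v _]; last exact: pchoose_sum1.
apply: Rsum_subset => [f|f _]; last exact: weight_ge0.
case/existsP=> a /existsP [b /and5P [ua _ _ /andP [/andP [_ d2] /eqP fua] /andP [ab bu]]].
by rewrite /wss_apex fua ua d2; apply/existsP; exists b; apply/andP.
Qed.

End ApexProbability.

Lemma card_lt_injU1 (T T' : finType) (A : pred T) (x : T) (f : T -> T') :
  x \notin A -> {in [predU1 x & A] &, injective f} -> (#|A| < #|T'|)%N.
Proof. by move=> xA /leq_card_in; rewrite cardU1 xA. Qed.

Section ApexCount.
Local Open Scope ring_scope.
Variables (n : nat) (u : vert n).

Lemma apex_near a :
  (a == u) || wss_apex u a -> forall i, (absz (coord a i - coord u i) <= 2)%N.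
Proof.
case/orP => [/eqP -> i | /and3P [_ _ /existsP [b /andP [/adjP [_ ab] /adjP [_ bu]]]] i].
  by rewrite subrr.
by move: (ab i) (bu i); lia.
Qed.

Variables (p q h : 'I_3).
Hypotheses (pq : p != q) (ph : p != h) (qh : q != h).
Hypothesis h_ge3 : (3 <= absz (coord u h))%N.

(* injective on [-2, 2] *)
Definition offset5 (z : int) : 'I_5 := Ordinal (ltn_pmod (absz (z + 2)) (isT : (0 < 5)%N)).

Definition apex_key (a : vert n) : 'I_5 * 'I_5 :=
  (offset5 (coord a p - coord u p), offset5 (coord a q - coord u q)).

(* the key gives [x_p] and [x_q], hence [|x_h| = n - |x_p| - |x_q|]; as [|x_h - u_h| <= 2]
   and [|u_h| >= 3], [x_h] has the sign of [u_h] *)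
Lemma apex_key_inj : {in [predU1 u & wss_apex u] &, injective apex_key}.
Proof.
move=> a a' /apex_near near_a /apex_near near_a' [].
move: (near_a p) (near_a' p) (near_a q) (near_a' q) => ap ap' aq aq'.
rewrite !modn_small; try lia.
move=> Ep Eq; have Xp : coord a p = coord a' p by clear -Ep ap ap'; lia.
have Xq : coord a q = coord a' q by clear -Eq aq aq'; lia.
have Eh : absz (coord a h) = absz (coord a' h).
  have := coord_l1_pqh pq ph qh a; have := coord_l1_pqh pq ph qh a'; rewrite Xp Xq.
  by clear; lia.
move: (near_a h) (near_a' h) => ah ah'.
by apply: (coord_pqh_ext pq ph qh); split=> //; clear -Eh ah ah' h_ge3; lia.
Qed.

Lemma card_wss_apex : (#|wss_apex u| <= 24)%N.
Proof.
have u_apex : u \notin wss_apex u by rewrite unfold_in /wss_apex eqxx.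
by have := card_lt_injU1 u_apex apex_key_inj; rewrite card_prod !card_ord.
Qed.

End ApexCount.

Section NormalizerBound.
Local Open Scope R_scope.
Variables (n : nat) (u : vert n) (p q h : 'I_3).
Hypotheses (pq : p != q) (ph : p != h) (qh : q != h).

Let level k := [pred v | same_side u h v && (pq_dist u p q v == k)].

Lemma pq_dist_gt0_neq v : (0 < pq_dist u p q v)%N -> u != v.
Proof. by apply: contraTneq => <-; rewrite /pq_dist !subrr. Qed.

Lemma Rsum_level_ge k : (0 < k)%N -> (k <= absz (coord u h))%N ->
  4 / INR k <= Rsum (level k) (inv_dist2 u).
Proof.
move=> k_gt0 kh; have k_gt0R : 0 < INR k by apply: lt_0_INR; apply/ltP.
apply: Rle_trans (_ : Rsum (level k) (fun _ => / INR k ^ 2) <= _); last first.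
  apply: Rsum_le => v /andP [sv /eqP dv]; apply: inv_dist2_ge.
    by apply: pq_dist_gt0_neq; rewrite dv.
  by rewrite -dv; apply: (dist_le_pq_dist pq ph qh); rewrite ?dv.
have : INR (4 * k) <= INR #|level k| by apply: le_INR; apply/leP; exact: card_pq_level.
rewrite Rsum_const mult_INR => card_ge.
apply: Rle_trans (Rmult_le_compat_r _ _ _ _ card_ge); last first.
  by apply: Rlt_le; apply: Rinv_0_lt_compat; apply: pow_lt.
by right; rewrite /=; field; lra.
Qed.

Lemma harm_le_Rsum_levels k : (k <= absz (coord u h))%N ->
  4 * harm k <= Rsum (fun v => same_side u h v && (0 < pq_dist u p q v <= k)%N) (inv_dist2 u).
Proof.
elim: k => [|k IH] kh.
  by rewrite /= Rmult_0_r; apply: Rsum_ge0 => *; apply: inv_dist2_ge0.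
rewrite harmS (Rsum_ID _ (fun v => pq_dist u p q v == k.+1)).
rewrite [X in _ <= X + _](eq_Rsuml (Q := level k.+1)) => [|v]; last first.
  by rewrite /level inE; case: (same_side _ _ _) => /=; lia.
rewrite [X in _ <= _ + X](eq_Rsuml (Q := fun v => same_side u h v && (0 < pq_dist u p q v <= k)%N))
  => [|v]; last by case: (same_side _ _ _) => /=; lia.
have := IH (ltnW kh); have := Rsum_level_ge (ltn0Sn k) kh; rewrite S_INR /Rdiv; lra.
Qed.

Lemma harm_le_inv_dist2_sum : 4 * harm (absz (coord u h)) <= inv_dist2_sum u.
Proof.
apply: Rle_trans (harm_le_Rsum_levels (leqnn _)) _; apply: Rsum_subset => [v|v _].
  by case/and3P => _ /pq_dist_gt0_neq; rewrite eq_sym.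
exact: inv_dist2_ge0.
Qed.

End NormalizerBound.

Section Bounds.
Local Open Scope R_scope.
Variables (n : nat) (u : vert n).
Hypothesis n_gt0 : (0 < n)%N.

(* a neighbour of [u] is never an apex, yet it carries positive weight *)
Lemma Pr_E4_lt1 w : u != w -> (Defs.dist u w <= 1)%N -> Pr (E4 u) < 1.
Proof.
move=> uw d1; have w_apex : ~~ wss_apex u w by apply/negP => /and3P [_ d2 _]; lia.
have sum_gt : Rsum (wss_apex u) (inv_dist2 u) < inv_dist2_sum u.
  apply: Rlt_le_trans (Rsum_subset (P := fun a => (a == w) || wss_apex u a) _ _).
  - rewrite (@Rsum_D1 _ (fun a => (a == w) || wss_apex u a) _ w) ?eqxx //.
    rewrite [X in _ < _ + X](eq_Rsuml (Q := wss_apex u)) => [|a].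
      by have := inv_dist2_gt0 uw; lra.
    by case: eqP => [->|_] /=; rewrite ?(negbTE w_apex) ?andbT.
  - by move=> a /orP [/eqP ->|/and3P []]; rewrite // eq_sym.
  - by move=> *; apply: inv_dist2_ge0.
have S_gt0 := inv_dist2_sum_gt0 u n_gt0.
apply: Rle_lt_trans (Pr_E4_le u n_gt0) _.
apply: (Rmult_lt_reg_r (inv_dist2_sum u)) => //.
by rewrite /Rdiv Rmult_assoc Rinv_l; lra.
Qed.

Lemma Pr_E4_le_ln (p q h : 'I_3) : p != q -> p != h -> q != h ->
  (3 <= absz (coord u h))%N -> Pr (E4 u) <= 3 / (2 * ln (INR (absz (coord u h)) + 1)).
Proof.
move=> pq ph qh h_ge3; set m := absz (coord u h).
have lnm_gt0 : 0 < ln (INR m + 1).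
  have m_ge1 : 1 <= INR m by apply: (le_INR 1); apply/leP; lia.
  by apply: ln_gt0; lra.
have T_le6 : Rsum (wss_apex u) (inv_dist2 u) <= 6.
  apply: Rle_trans (Rsum_le (G := fun _ => / 4) _) _ => [a /and3P [_ d2 _]|].
    exact: inv_dist2_le_quarter.
  have : INR #|wss_apex u| <= INR 24.
    by apply: le_INR; apply/leP; exact: card_wss_apex pq ph qh h_ge3.
  by rewrite Rsum_const /=; lra.
have S_ge : 4 * ln (INR m + 1) <= inv_dist2_sum u.
  by have := ln_le_harm m; have := harm_le_inv_dist2_sum u pq ph qh; rewrite -/m; lra.
apply: Rle_trans (Pr_E4_le u n_gt0) _; rewrite /Rdiv.
apply: Rle_trans (_ : 6 * / (4 * ln (INR m + 1)) <= _); last by right; field; lra.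
apply: Rmult_le_compat => //.
- by apply: Rsum_ge0 => *; apply: inv_dist2_ge0.
- by apply: Rlt_le; apply: Rinv_0_lt_compat; apply: inv_dist2_sum_gt0.
- by apply: Rinv_le_contravar => //; lra.
Qed.

Lemma Pr_E4_lt (p q h : 'I_3) : p != q -> p != h -> q != h ->
  (n <= 3 * absz (coord u h))%N -> Pr (E4 u) < 3 / ln (INR n + 1).
Proof.
move=> pq ph qh nh; set m := absz (coord u h).
have n_ge1 : 1 <= INR n by apply: (le_INR 1); apply/leP.
have lnn_gt0 : 0 < ln (INR n + 1) by apply: ln_gt0; lra.
have [n_le6|n_gt6] := leqP n 6.
  have m_gt0 : (0 < m)%N by rewrite /m; lia.
  have [w uw d1] := exists_neighbour pq ph qh m_gt0.
  apply: Rlt_trans (Pr_E4_lt1 uw d1) _.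
  have n_le6R : INR n <= INR 6 by apply: le_INR; apply/leP.
  have lnn_lt3 : ln (INR n + 1) < 3 by apply: ln_lt3; rewrite /= in n_le6R; lra.
  apply: (Rmult_lt_reg_r (ln (INR n + 1))) => //.
  by rewrite /Rdiv Rmult_assoc Rinv_l; lra.
have m_ge3 : (3 <= m)%N by rewrite /m; lia.
have lnm_lt := ln_succ_lt_double (ltnW m_ge3) nh.
apply: Rle_lt_trans (Pr_E4_le_ln pq ph qh m_ge3) _; rewrite -/m /Rdiv.
apply: Rmult_lt_compat_l; first lra.
by apply: Rinv_lt_contravar => //; apply: Rmult_lt_0_compat; lra.
Qed.

End Bounds.

Theorem lemma8 (n : nat) (hn : (1 <= n)%N) (u : vert n) :
  Rlt (Pr (E4 u)) (Rdiv (IZR 3) (ln (Rplus (INR n) R1))).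
Proof.
have l1u := coord_l1 u.
have [h0|h0] := leqP n (3 * absz (coord u i0)); first exact: (@Pr_E4_lt n u hn i1 i2 i0).
have [h1|h1] := leqP n (3 * absz (coord u i1)); first exact: (@Pr_E4_lt n u hn i0 i2 i1).
by apply: (@Pr_E4_lt n u hn i0 i1 i2) => //; lia.
Qed.
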